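(* Let $m,n$ be integers with $0\le m<n$, let $M,N\subseteq\mathbb Z$ be finite nonempty sets, and let $U=b^m a^M$, $V=b^n a^N$ and $S=U\cup V\subseteq BS^{+}(1,3)$. If $|S|\geq 4$, then $|S^2|\geq \tfrac{7}{2}|S|-6$.
   Context: $BS(1,3)=\langle a,b\mid ab=ba^3\rangle$; $BS^{+}(1,3)=\{b^m a^x: m\in\mathbb{Z}_{\ge 0},\ x\in\mathbb{Z}\}$, with $(b^m a^x)(b^n a^y)=b^{m+n}a^{y+3^n x}$. For $A\subseteq\mathbb Z$, $b^m a^A=\{b^m a^x: x\in A\}$. $S^2=\{st: s,t\in S\}$. *)

From HB Require Import structures.
From mathcomp Require Import all_boot all_order all_algebra.
From mathcomp Require Import finmap.
Set Implicit Arguments. Unset Strict Implicit. Unset Printing Implicit Defensive.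
Import GRing.Theory Num.Theory.
Local Open Scope fset_scope.

(* Elements of the monoid BS^+(1,3): b^m a^x is encoded as the pair (m, x). *)
Definition BSp := (nat * int)%type.

(* (b^m a^x)(b^n a^y) = b^(m+n) a^(y + 3^n x) *)
Definition bsmul (s t : BSp) : BSp :=
  ((s.1 + t.1)%N, (t.2 + (3 ^ t.1)%N%:Z * s.2)%R).

Definition bpow (m : nat) (A : {fset int}) : {fset BSp} :=
  [fset ((m, x) : BSp) | x in A].

Definition sqset (S : {fset BSp}) : {fset BSp} :=
  [fset bsmul s t | s in S, t in S].

From mathcomp Require Import all_boot all_order all_algebra.
From mathcomp Require Import finmap.
From mathcomp Require Import zify ring lra.
Set Implicit Arguments. Unset Strict Implicit. Unset Printing Implicit Defensive.
Import Order.TTheory GRing.Theory Num.Theory.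
Local Open Scope fset_scope.
Local Open Scope ring_scope.

(* S^2 is the disjoint union of the layers b^(2m), b^(m+n), b^(2n), with exponent sets
   M + 3^m.M, (M + 3^m.N) \cup (N + 3^n.M) and N + 3^n.N.  For m > 0, the bounds
   |A + l.A| >= 3|A| - 2 (l >= 2) and |A + B| >= |A| + |B| - 1 already give 4|S| - 5.
   For m = 0 and l = 3^n one argues by induction on the diameter: if N, or M relative
   to the part D of M whose translates x + nu land in N + l.M, meets two residue classes
   mod l, one of the sumsets splits into two disjoint pieces and gains enough; if D is
   small the middle layer gains |M| - |D|; otherwise M lies in l.Z and N in nu + l.Z,
   and dividing out by l shrinks the diameter without enlarging any layer. *)

Lemma card_disjoint_le (K : choiceType) (X Y Z : {fset K}) :
  X `<=` Z -> Y `<=` Z -> [disjoint X & Y] -> (#|` X| + #|` Y| <= #|` Z|)%N.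
Proof.
move=> sXZ sYZ dXY; have := (leq_card_fsetU X Y).2; rewrite dXY => /eqP <-.
by apply: fsubset_leq_card; rewrite fsubUset sXZ sYZ.
Qed.

Lemma card_fsep_le (K : choiceType) (A : {fset K}) (P : pred K) :
  (#|` A| <= #|` [fset x in A | P x]| + #|` [fset x in A | ~~ P x]|)%N.
Proof.
apply: leq_trans (leq_card_fsetU _ _).1.
by apply: fsubset_leq_card; apply/fsubsetP => x xA; rewrite !inE xA orbN.
Qed.

Lemma card_le_affine (u l : int) (X Z : {fset int}) : l != 0 ->
  {in X, forall x, u + l * x \in Z} -> (#|` X| <= #|` Z|)%N.
Proof.
move=> l0 XZ; have <- : #|` [fset u + l * x | x in X]| = #|` X|.
  by apply: card_in_imfset => x y _ _ /addrI /(mulfI l0).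
by apply: fsubset_leq_card; apply/fsubsetP => _ /imfsetP [x xX ->]; apply: XZ.
Qed.

Lemma ex_fset_max (X : {fset int}) :
  X != fset0 -> exists2 x, x \in X & {in X, forall y, y <= x}.
Proof.
case/fset0Pn => x0 x0X; have [/= i _ iM] := @arg_maxP _ int X [` x0X] xpredT val isT.
by exists (val i) => [|y yX]; [exact: valP | exact: (iM [` yX])].
Qed.

Lemma ex_fset_min (X : {fset int}) :
  X != fset0 -> exists2 x, x \in X & {in X, forall y, x <= y}.
Proof.
case/fset0Pn => x0 x0X; have [/= i _ im] := @arg_minP _ int X [` x0X] xpredT val isT.
by exists (val i) => [|y yX]; [exact: valP | exact: (im [` yX])].
Qed.

Lemma ex_diam_bound (A : {fset int}) :
  exists K : nat, {in A &, forall x y, x - y <= K%:Z}.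
Proof.
have [-> | A0] := eqVneq A fset0; first by exists 0%N => x y; rewrite inE.
have [a aA aM] := ex_fset_max A0; have [b bA bm] := ex_fset_min A0.
by exists `|a - b|%N => x y xA yA; have := aM x xA; have := bm y yA; lia.
Qed.

Lemma card_le1_diam0 (A : {fset int}) :
  {in A &, forall x y, x - y <= 0%N%:Z} -> (#|` A| <= 1)%N.
Proof.
have [-> | /fset0Pn [a aA]] := eqVneq A fset0; first by rewrite cardfs0.
move=> dA; rewrite -(cardfs1 a); apply: fsubset_leq_card; apply/fsubsetP => x xA.
by rewrite inE; apply/eqP; have := dA _ _ xA aA; have := dA _ _ aA xA; lia.
Qed.

Definition sumset (X Y : {fset int}) : {fset int} := [fset x + y | x in X, y in Y].
Definition dilate (c : int) (X : {fset int}) : {fset int} := [fset c * x | x in X].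

Lemma sumsetP X Y z :
  reflect (exists2 x, x \in X & exists2 y, y \in Y & z = x + y) (z \in sumset X Y).
Proof. exact: imfset2P. Qed.

Lemma mem_sumset X Y x y : x \in X -> y \in Y -> x + y \in sumset X Y.
Proof. by move=> xX yY; apply/sumsetP; exists x => //; exists y. Qed.

Lemma sumsetSl X X' Y : X `<=` X' -> sumset X Y `<=` sumset X' Y.
Proof.
move=> /fsubsetP sX; apply/fsubsetP => _ /sumsetP [x xX [y yY ->]].
by apply: mem_sumset; first exact: sX.
Qed.

Lemma sumsetSr X Y Y' : Y `<=` Y' -> sumset X Y `<=` sumset X Y'.
Proof.
move=> /fsubsetP sY; apply/fsubsetP => _ /sumsetP [x xX [y yY ->]].
by apply: mem_sumset; last exact: sY.
Qed.

Lemma dilateP c X z : reflect (exists2 x, x \in X & z = c * x) (z \in dilate c X).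
Proof. exact: imfsetP. Qed.

Lemma mem_dilate c X x : x \in X -> c * x \in dilate c X.
Proof. by move=> xX; apply/dilateP; exists x. Qed.

Lemma card_dilate c X : c != 0 -> #|` dilate c X| = #|` X|.
Proof. by move=> c0; apply: card_in_imfset => x y _ _; apply: mulfI. Qed.

Lemma dilate_eq0 c X : c != 0 -> (dilate c X == fset0) = (X == fset0).
Proof. by move=> c0; rewrite -!cardfs_eq0 card_dilate. Qed.

Lemma dilate1 X : dilate 1 X = X.
Proof.
apply/fsetP => z; apply/dilateP/idP => [[x xX ->] | zX]; first by rewrite mul1r.
by exists z; rewrite ?mul1r.
Qed.

Lemma dvdz_sub_dilate l X : {in dilate l X &, forall y y', (l %| y - y')%Z}.
Proof.
by move=> _ _ /dilateP [x _ ->] /dilateP [x' _ ->]; rewrite -mulrBr dvdz_mulr.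
Qed.

(* Cauchy-Davenport over Z: the sums max X + Y and X + min Y meet only in max X + min Y. *)
Lemma card_sumset_ge X Y : X != fset0 -> Y != fset0 ->
  (#|` X| + #|` Y| <= #|` sumset X Y| + 1)%N.
Proof.
move=> X0 Y0; have [xM xMX xMmax] := ex_fset_max X0; have [ym ymY ymmin] := ex_fset_min Y0.
pose P := [fset xM + y | y in Y]; pose Q := [fset x + ym | x in X].
have cP : #|` P| = #|` Y| by apply: card_in_imfset => a b _ _; apply: addrI.
have cQ : #|` Q| = #|` X| by apply: card_in_imfset => a b _ _; apply: addIr.
have PQ : (#|` P `|` Q| <= #|` sumset X Y|)%N.
  apply: fsubset_leq_card; apply/fsubsetP => z /fsetUP [] /imfsetP [w wXY ->];
  exact: mem_sumset.
have PIQ : (#|` P `&` Q| <= 1)%N.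
  rewrite -(cardfs1 (xM + ym)); apply: fsubset_leq_card; apply/fsubsetP => z.
  case/fsetIP => /imfsetP [y yY ->] /imfsetP [x xX /= e]; rewrite inE; apply/eqP.
  by have := xMmax x xX; have := ymmin y yY; lia.
by have := cardfsUI P Q; rewrite cP cQ; lia.
Qed.

(* Splitting A by residue mod l: the two parts give disjoint sumsets with B. *)
Lemma card_sumset_split (l : int) (A B : {fset int}) a a' :
  a \in A -> a' \in A -> ~~ (l %| a' - a)%Z -> B != fset0 ->
  {in B &, forall y y', (l %| y - y')%Z} ->
  (#|` A| + 2 * #|` B| <= #|` sumset A B| + 2)%N.
Proof.
move=> aA a'A na'a B0 dB.
pose A1 := [fset x in A | (l %| x - a)%Z]; pose A2 := [fset x in A | ~~ (l %| x - a)%Z].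
have A1_0 : A1 != fset0 by apply/fset0Pn; exists a; rewrite !inE aA subrr dvdz0.
have A2_0 : A2 != fset0 by apply/fset0Pn; exists a'; rewrite !inE a'A.
have sA1A : A1 `<=` A by apply/fsubsetP => x; rewrite !inE => /andP [].
have sA2A : A2 `<=` A by apply/fsubsetP => x; rewrite !inE => /andP [].
have disj : [disjoint sumset A1 B & sumset A2 B].
  apply/fdisjointP => _ /sumsetP [x1 + [y1 y1B ->]]; rewrite !inE => /andP [_ d1].
  apply/sumsetP => -[x2 + [y2 y2B e]]; rewrite !inE => /andP [_]; apply/negP/negPn.
  have -> : x2 - a = (x1 - a) + (y1 - y2) by lia.
  by rewrite rpredD // dB.
have := card_disjoint_le (sumsetSl B sA1A) (sumsetSl B sA2A) disj.
have : (#|` A| <= #|` A1| + #|` A2|)%N := card_fsep_le A _.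
by have := card_sumset_ge A1_0 B0; have := card_sumset_ge A2_0 B0; lia.
Qed.

Definition contract (l c : int) (A : {fset int}) : {fset int} :=
  [fset ((x - c) %/ l)%Z | x in A].

Section Contract.
Variables (l c : int) (A : {fset int}).
Hypotheses (l0 : l != 0) (dA : {in A, forall x, (l %| x - c)%Z}).

Lemma contractK x : x \in A -> c + l * ((x - c) %/ l)%Z = x.
Proof. by move=> xA; rewrite mulrC divzK ?dA //; ring. Qed.

Lemma mem_contract x' : (x' \in contract l c A) = (c + l * x' \in A).
Proof.
apply/imfsetP/idP => [[x xA ->] | h]; first by rewrite contractK.
by exists (c + l * x') => //; rewrite addrAC subrr add0r mulKz.
Qed.

Lemma card_contract : #|` contract l c A| = #|` A|.
Proof.
by apply: card_in_imfset => x y xA yA e; rewrite -(contractK xA) -(contractK yA) e.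
Qed.

Lemma contract_eq0 : (contract l c A == fset0) = (A == fset0).
Proof. by rewrite -!cardfs_eq0 card_contract. Qed.

Lemma contract_diam (K : nat) : 2 <= l ->
  {in A &, forall x y, x - y <= K.+1%:Z} ->
  {in contract l c A &, forall x y, x - y <= K%:Z}.
Proof.
move=> l2 dK x' y'; rewrite !mem_contract => xA yA; have := dK _ _ xA yA.
have -> : c + l * x' - (c + l * y') = l * (x' - y') by ring.
by nia.
Qed.

End Contract.

(* Either A meets two classes mod l and the sumset splits, or A = a + l.A' and
   A' + l.A' embeds affinely into A + l.A while the diameter shrinks. *)
Lemma card_sumset_dilate (l : int) (A : {fset int}) : 2 <= l -> A != fset0 ->
  (3 * #|` A| <= #|` sumset A (dilate l A)| + 2)%N.
Proof.
move=> l2; have l0 : l != 0 by lia.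
have [K dA] := ex_diam_bound A; elim/ltn_ind: K A dA => K IH A dA A0.
have [a aA] := fset0Pn _ A0.
have lA0 : dilate l A != fset0 by rewrite dilate_eq0.
have [/allP cA | /allPn [a' a'A na'a]] := boolP (all (fun x => (l %| x - a)%Z) A);
  last by have := card_sumset_split aA a'A na'a lA0 (@dvdz_sub_dilate l A);
          rewrite card_dilate //; lia.
case: K IH dA => [|K] IH dA.
  have := card_le1_diam0 dA.
  have : (0 < #|` sumset A (dilate l A)|)%N.
    rewrite cardfs_gt0; apply/fset0Pn; exists (a + l * a).
    by apply: mem_sumset; last exact: mem_dilate.
  lia.
have := IH K (ltnSn K) _ (contract_diam l0 cA l2 dA).
rewrite contract_eq0 // card_contract // => /(_ A0).
have : (#|` sumset (contract l a A) (dilate l (contract l a A))| <= #|` sumset A (dilate l A)|)%N.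
  apply: (card_le_affine (u := a + l * a) l0) => _ /sumsetP [x xA' [_ /dilateP [y yA' ->] ->]].
  move: xA' yA'; rewrite !(mem_contract l0 cA) => xA yA.
  have -> : a + l * a + l * (x + l * y) = (a + l * x) + l * (a + l * y) by ring.
  by apply: mem_sumset => //; apply: mem_dilate.
lia.
Qed.

(* |S^2| for S = b^m a^M \cup b^n a^N, counted layer by layer, with lm = 3^m and ln = 3^n. *)
Definition layer_sum (lm ln : int) (M N : {fset int}) : nat :=
  (#|` sumset M (dilate lm M)| + #|` sumset M (dilate lm N) `|` sumset N (dilate ln M)|
   + #|` sumset N (dilate ln N)|)%N.

Definition absorbed (l nu : int) (M N : {fset int}) : {fset int} :=
  [fset x in M | x + nu \in sumset N (dilate l M)].

Lemma card_mixed_layer (l nu : int) (M N : {fset int}) : nu \in N ->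
  (#|` sumset N (dilate l M)| + #|` M| <=
   #|` sumset M N `|` sumset N (dilate l M)| + #|` absorbed l nu M N|)%N.
Proof.
move=> nuN; pose D' := [fset x in M | x + nu \notin sumset N (dilate l M)].
have : (#|` M| <= #|` absorbed l nu M N| + #|` D'|)%N := card_fsep_le M _.
pose D'nu := [fset x + nu | x in D'].
have <- : #|` D'nu| = #|` D'| by apply: card_in_imfset => x y _ _; apply: addIr.
suff : (#|` sumset N (dilate l M)| + #|` D'nu| <=
        #|` sumset M N `|` sumset N (dilate l M)|)%N by lia.
apply: card_disjoint_le; first exact: fsubsetUr.
  apply/fsubsetP => _ /imfsetP [x /= + ->]; rewrite !inE => /andP [xM _].
  by apply/orP; left; apply: mem_sumset.
apply/fdisjointP => z zNM; apply/imfsetP => -[x /= +  e].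
by rewrite !inE -e zNM andbF.
Qed.

Lemma absorbed_dvdz l nu M N : {in N, forall y, (l %| y - nu)%Z} ->
  {in absorbed l nu M N, forall x, (l %| x)%Z}.
Proof.
move=> dN x; rewrite !inE => /andP [_ /sumsetP [y yN [_ /dilateP [z _ ->] e]]].
have -> : x = (y - nu) + l * z by lia.
by rewrite rpredD ?dN ?dvdz_mulr.
Qed.

Section ZeroExponent.
Variables (l : int) (M N : {fset int}).
Hypotheses (l2 : 2 <= l) (M0 : M != fset0) (N0 : N != fset0).

Let l0 : l != 0. Proof. by lia. Qed.

Let card_sumset_NlM : (#|` M| + #|` N| <= #|` sumset N (dilate l M)| + 1)%N.
Proof.
have lM0 : dilate l M != fset0 by rewrite dilate_eq0.
by have := card_sumset_ge N0 lM0; rewrite card_dilate //; lia.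
Qed.

Lemma layer_sum1_split_N nu nu' : nu \in N -> nu' \in N -> ~~ (l %| nu' - nu)%Z ->
  (7 * (#|` M| + #|` N|) <= 2 * layer_sum 1 l M N + 12)%N.
Proof.
move=> nuN nu'N nnu; rewrite /layer_sum !dilate1.
have lM0 : dilate l M != fset0 by rewrite dilate_eq0.
have := card_sumset_split nuN nu'N nnu lM0 (@dvdz_sub_dilate l M); rewrite card_dilate //.
have := fsubset_leq_card (fsubsetUr (sumset M N) (sumset N (dilate l M))).
by have := card_sumset_ge M0 M0; have := card_sumset_dilate l2 N0; lia.
Qed.

Lemma layer_sum1_small_absorbed nu : nu \in N ->
  (2 * #|` absorbed l nu M N| <= #|` M| + #|` N| + 4)%N ->
  (7 * (#|` M| + #|` N|) <= 2 * layer_sum 1 l M N + 12)%N.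
Proof.
move=> nuN; rewrite /layer_sum !dilate1.
have := card_mixed_layer l M nuN; have := card_sumset_NlM.
by have := card_sumset_ge M0 M0; have := card_sumset_dilate l2 N0; lia.
Qed.

Lemma layer_sum1_split_M nu x0 a : nu \in N -> {in N, forall y, (l %| y - nu)%Z} ->
  x0 \in absorbed l nu M N -> a \in M -> ~~ (l %| a - x0)%Z ->
  (#|` M| + #|` N| + 4 < 2 * #|` absorbed l nu M N|)%N ->
  (7 * (#|` M| + #|` N|) <= 2 * layer_sum 1 l M N + 12)%N.
Proof.
move=> nuN dN x0D aM nax0; rewrite /layer_sum !dilate1.
have sDM : absorbed l nu M N `<=` M by apply/fsubsetP => x; rewrite !inE => /andP [].
have dD : {in absorbed l nu M N &, forall y y', (l %| y - y')%Z}.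
  by have dD0 := absorbed_dvdz (M := M) dN; move=> y y' /dD0 dy /dD0 dy'; rewrite rpredB.
have D0 : absorbed l nu M N != fset0 by apply/fset0Pn; exists x0.
have := card_sumset_split (fsubsetP sDM _ x0D) aM nax0 D0 dD.
have := fsubset_leq_card (sumsetSr M sDM).
have := card_mixed_layer l M nuN; have := card_sumset_NlM.
by have := card_sumset_dilate l2 N0; lia.
Qed.

End ZeroExponent.

Lemma layer_sum1_contract (l nu : int) (M N : {fset int}) : l != 0 ->
  {in M, forall x, (l %| x - 0)%Z} ->
  {in N, forall y, (l %| y - nu)%Z} ->
  (layer_sum 1 l (contract l 0 M) (contract l nu N) <= layer_sum 1 l M N)%N.
Proof.
move=> l0 dM dN; rewrite /layer_sum !dilate1.
have PM := mem_contract l0 dM; have PN := mem_contract l0 dN.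
apply: leq_add; first apply: leq_add.
- apply: (card_le_affine (u := 0) l0) => _ /sumsetP [x xM [y yM ->]].
  by move: xM yM; rewrite !PM !add0r mulrDr; apply: mem_sumset.
- apply: (card_le_affine (u := nu) l0) => _ /fsetUP [] /sumsetP [x xX [y yY ->]];
    apply/fsetUP.
    left; move: xX yY; rewrite PM PN add0r => xM yN.
    have -> : nu + l * (x + y) = l * x + (nu + l * y) by ring.
    exact: mem_sumset.
  right; case/dilateP: yY => w wM ->; move: xX wM; rewrite PM PN add0r => xN wM.
  have -> : nu + l * (x + l * w) = (nu + l * x) + l * (l * w) by ring.
  by apply: mem_sumset => //; apply: mem_dilate.
- apply: (card_le_affine (u := nu + l * nu) l0) => _ /sumsetP [x xN' [_ /dilateP [w wN' ->] ->]].
  move: xN' wN'; rewrite !PN => xN wN.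
  have -> : nu + l * nu + l * (x + l * w) = (nu + l * x) + l * (nu + l * w) by ring.
  by apply: mem_sumset => //; apply: mem_dilate.
Qed.

Lemma layer_sum1_ge (l : int) (M N : {fset int}) :
  2 <= l -> M != fset0 -> N != fset0 -> (4 <= #|` M| + #|` N|)%N ->
  (7 * (#|` M| + #|` N|) <= 2 * layer_sum 1 l M N + 12)%N.
Proof.
move=> l2; have l0 : l != 0 by lia.
have [K dMN] := ex_diam_bound (M `|` N).
have dM : {in M &, forall x y, x - y <= K%:Z} by move=> x y xM yM; rewrite dMN // inE (xM, yM).
have dN : {in N &, forall x y, x - y <= K%:Z} by move=> x y xN yN; rewrite dMN // inE (xN, yN) orbT.
elim/ltn_ind: K M N dM dN {dMN} => K IH M N dM dN M0 N0 s4.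
have [nu nuN] := fset0Pn _ N0.
have [/allP cN | /allPn [nu' nu'N nnu]] := boolP (all (fun y => (l %| y - nu)%Z) N);
  last exact: (layer_sum1_split_N l2 M0 N0 nuN nu'N nnu).
have [Dsmall | Dbig] := leqP (2 * #|` absorbed l nu M N|) (#|` M| + #|` N| + 4);
  first exact: (layer_sum1_small_absorbed l2 M0 N0 nuN).
have /fset0Pn [x0 x0D] : absorbed l nu M N != fset0 by rewrite -cardfs_gt0; lia.
have [/allP cM | /allPn [a aM nax0]] := boolP (all (fun x => (l %| x - x0)%Z) M);
  last exact: (layer_sum1_split_M l2 M0 N0 nuN cN x0D aM nax0 Dbig).
have cM0 : {in M, forall x, (l %| x - 0)%Z}.
  move=> x xM; rewrite subr0 -(subrK x0 x) rpredD ?cM //.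
  exact: (absorbed_dvdz (M := M) cN).
case: K IH dM dN => [|K] IH dM dN.
  by have := card_le1_diam0 dM; have := card_le1_diam0 dN; lia.
have := IH K (ltnSn K) (contract l 0 M) (contract l nu N)
  (contract_diam l0 cM0 l2 dM) (contract_diam l0 cN l2 dN).
rewrite !contract_eq0 // !card_contract // => /(_ M0 N0 s4).
by have := layer_sum1_contract l0 cM0 cN; lia.
Qed.

Lemma card_bpow (a : nat) (X : {fset int}) : #|` bpow a X| = #|` X|.
Proof. by apply: card_in_imfset => x y _ _ [->]. Qed.

Lemma bpowP (a : nat) (X : {fset int}) (p : BSp) : (p \in bpow a X) = (p.1 == a) && (p.2 \in X).
Proof.
apply/imfsetP/andP => [[x xX ->] | [/eqP <- pX]] /=; first by rewrite eqxx.
by exists p.2 => //; case: p pX.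
Qed.

Lemma bpowU (a : nat) (X Y : {fset int}) : bpow a (X `|` Y) = bpow a X `|` bpow a Y.
Proof. by apply/fsetP => p; rewrite inE !bpowP inE andb_orr. Qed.

Lemma bpow_disjoint (a b : nat) (X Y : {fset int}) : a != b -> [disjoint bpow a X & bpow b Y].
Proof.
move=> ab; apply/fdisjointP => p; rewrite !bpowP => /andP [/eqP pa _].
by rewrite pa (negbTE ab).
Qed.

Lemma card_bpowU (a b : nat) (X Y : {fset int}) :
  a != b -> #|` bpow a X `|` bpow b Y| = (#|` X| + #|` Y|)%N.
Proof.
move=> ab; have := (leq_card_fsetU (bpow a X) (bpow b Y)).2.
by rewrite bpow_disjoint // !card_bpow => /eqP.
Qed.

Lemma bpow_sub_sqset (S : {fset BSp}) (m n : nat) (X Y : {fset int}) :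
  bpow m X `<=` S -> bpow n Y `<=` S ->
  bpow (m + n) (sumset Y (dilate (3 ^ n)%N%:Z X)) `<=` sqset S.
Proof.
move=> /fsubsetP XS /fsubsetP YS; apply/fsubsetP => p /imfsetP [z /sumsetP [y yY]].
case=> _ /dilateP [x xX ->] -> ->; apply/imfset2P.
exists (m, x); first by apply: XS; rewrite bpowP eqxx.
by exists (n, y); first by apply: YS; rewrite bpowP eqxx.
Qed.

Lemma layer_sum_le_sqset (m n : nat) (M N : {fset int}) : (m < n)%N ->
  (layer_sum (3 ^ m)%N%:Z (3 ^ n)%N%:Z M N <= #|` sqset (bpow m M `|` bpow n N)|)%N.
Proof.
move=> mn; set S := bpow m M `|` bpow n N.
have MS : bpow m M `<=` S := fsubsetUl _ _.
have NS : bpow n N `<=` S := fsubsetUr _ _.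
have sub_mid : bpow (m + n) (sumset M (dilate (3 ^ m)%N%:Z N) `|`
                             sumset N (dilate (3 ^ n)%N%:Z M)) `<=` sqset S.
  rewrite bpowU fsubUset (bpow_sub_sqset MS NS) andbT addnC.
  exact: bpow_sub_sqset.
rewrite /layer_sum; set L1 := sumset M (dilate _ M); set L3 := sumset N (dilate _ N).
set Lmid := sumset M _ `|` _ in sub_mid *.
have sub_low : bpow (m + m) L1 `<=` sqset S := bpow_sub_sqset MS MS.
have sub_high : bpow (n + n) L3 `<=` sqset S := bpow_sub_sqset NS NS.
have := @card_disjoint_le _ (bpow (m + m) L1 `|` bpow (m + n) Lmid) _ _ _ sub_high.
rewrite fsubUset sub_low sub_mid fdisjointUX !bpow_disjoint ?card_bpowU ?card_bpow;
  by [move=> /(_ isT isT) | lia].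
Qed.

Lemma layer_sum_ge (lm ln : int) (M N : {fset int}) :
  2 <= lm -> 2 <= ln -> M != fset0 -> N != fset0 ->
  (4 * (#|` M| + #|` N|) <= layer_sum lm ln M N + 5)%N.
Proof.
move=> lm2 ln2 M0 N0; rewrite /layer_sum.
have lnM0 : dilate ln M != fset0 by rewrite dilate_eq0 //; lia.
have := card_sumset_ge N0 lnM0; rewrite card_dilate; last by lia.
have := fsubset_leq_card (fsubsetUr (sumset M (dilate lm N)) (sumset N (dilate ln M))).
by have := card_sumset_dilate lm2 M0; have := card_sumset_dilate ln2 N0; lia.
Qed.

Lemma three_pow_ge2 (n : nat) : (0 < n)%N -> 2 <= (3 ^ n)%N%:Z.
Proof. by case: n => // n _; rewrite expnS; have := expn_gt0 3 n; lia. Qed.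

Lemma rat_bound_of_nat (s q : nat) : (7 * s <= 2 * q + 12)%N ->
  7%:R / 2%:R * s%:R - 6%:R <= q%:R :> rat.
Proof. by rewrite -(ler_nat rat) natrD !natrM => h; lra. Qed.

Local Close Scope ring_scope.

Theorem lemma2p1 (m n : nat) (M N : {fset int}) :
  (m < n)%N -> M != fset0 -> N != fset0 ->
  let S := bpow m M `|` bpow n N in
  (4 <= #|` S|)%N ->
  ((#|` sqset S|)%:R >= (7%:R / 2%:R) * (#|` S|)%:R - 6%:R :> rat)%R.
Proof.
move=> mn M0 N0 S S4; apply: rat_bound_of_nat.
have cS : #|` S| = (#|` M| + #|` N|)%N by apply: card_bpowU; lia.
rewrite cS in S4 *; have := layer_sum_le_sqset M N mn; rewrite -/S.
have ln2 := three_pow_ge2 (leq_ltn_trans (leq0n m) mn).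
have [m0 | m_gt0] := posnP m.
  rewrite m0 (_ : ((3 ^ 0)%N%:Z = 1)%R) //.
  by have := layer_sum1_ge ln2 M0 N0 S4; lia.
by have := layer_sum_ge (three_pow_ge2 m_gt0) ln2 M0 N0; lia.
Qed.
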